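(* Let $A\in\mathbb{R}^{n\times n}$, $B\in\mathbb{R}^{n\times m}$, symmetric $Q\succeq 0$, symmetric $R\succ 0$, $Q_f\succ 0$, and a horizon $t_f\in\mathbb{N}$. For a binary switching signal $\sigma$, define $P_\sigma(t)$ for $t=t_f,t_f-1,\ldots,0$ by $P_\sigma(t_f)=Q_f$ and $P_\sigma(t)=Q+A^{\mathsf T}P_\sigma(t+1)A-\sigma(t)A^{\mathsf T}P_\sigma(t+1)B\,(R+B^{\mathsf T}P_\sigma(t+1)B)^{-1}B^{\mathsf T}P_\sigma(t+1)A$. If $\sigma_1\preceq\sigma_2$, then $P_{\sigma_1}(0)\succeq P_{\sigma_2}(0)$ (in the positive semidefinite order).
   Context: $P_\sigma(0)$ gives the optimal finite-horizon LQR cost $x_0^{\mathsf T}P_\sigma(0)x_0$ for the time-varying system $x(t+1)=Ax(t)+\sigma(t)Bu(t)$ with cost $x(t_f)^{\mathsf T}Q_fx(t_f)+\sum_{t<t_f}(x(t)^{\mathsf T}Qx(t)+u(t)^{\mathsf T}Ru(t))$. Partial order on binary signals: $\sigma_1\preceq\sigma_2$ if for every $i$ with $\sigma_1(i)=1$ we also have $\sigma_2(i)=1$. *)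

From HB Require Import structures.
From mathcomp Require Import all_boot all_order all_algebra.
Set Implicit Arguments. Unset Strict Implicit. Unset Printing Implicit Defensive.
Import Order.TTheory GRing.Theory Num.Theory.
Local Open Scope ring_scope.

Definition qform (R : realFieldType) n (M : 'M[R]_n) (x : 'cV[R]_n) : R :=
  (x^T *m M *m x) 0 0.

Definition psd (R : realFieldType) n (M : 'M[R]_n) : Prop :=
  M^T = M /\ forall x : 'cV[R]_n, 0 <= qform M x.

Definition pd (R : realFieldType) n (M : 'M[R]_n) : Prop :=
  M^T = M /\ forall x : 'cV[R]_n, x != 0 -> 0 < qform M x.

Definition loewner_ge (R : realFieldType) n (M1 M2 : 'M[R]_n) : Prop :=
  psd (M1 - M2).

Definition riccati_step (R : realFieldType) n m (A : 'M[R]_n) (B : 'M[R]_(n, m))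
    (Q : 'M[R]_n) (Rw : 'M[R]_m) (s : bool) (P : 'M[R]_n) : 'M[R]_n :=
  Q + A^T *m P *m A
    - (s%:R : R) *: (A^T *m P *m B *m invmx (Rw + B^T *m P *m B) *m B^T *m P *m A).

(* P_sigma(t) for t <= tf, computed backward from P_sigma(tf) = Qf.
   riccati_from k t P = the value at time t given the value P at time t + k. *)
Fixpoint riccati_from (R : realFieldType) n m (A : 'M[R]_n) (B : 'M[R]_(n, m))
    (Q : 'M[R]_n) (Rw : 'M[R]_m) (sigma : nat -> bool) (k t : nat) (P : 'M[R]_n)
    : 'M[R]_n :=
  match k with
  | 0%N => P
  | k'.+1 => riccati_step A B Q Rw (sigma t)
               (riccati_from A B Q Rw sigma k' t.+1 P)
  end.

Definition P_sigma (R : realFieldType) n m (A : 'M[R]_n) (B : 'M[R]_(n, m))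
    (Q : 'M[R]_n) (Rw : 'M[R]_m) (Qf : 'M[R]_n) (tf : nat)
    (sigma : nat -> bool) (t : nat) : 'M[R]_n :=
  riccati_from A B Q Rw sigma (tf - t) t Qf.

Definition signal_le (sigma1 sigma2 : nat -> bool) : Prop :=
  forall i, sigma1 i -> sigma2 i.

From HB Require Import structures.
From mathcomp Require Import all_boot all_order all_algebra ring.
Set Implicit Arguments. Unset Strict Implicit. Unset Printing Implicit Defensive.
Import Order.TTheory GRing.Theory Num.Theory.
Local Open Scope ring_scope.

(* The quadratic form of the Riccati step is a one-step cost-to-go: completing
   the square shows that [x^T P(t) x] is the minimum over [u] of
   [x^T Q x + u^T Rw u + (A x + B u)^T P(t+1) (A x + B u)] when [sigma(t) = 1],
   while for [sigma(t) = 0] it is the same cost at [u = 0].  Hence each step is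
   monotone in [P(t+1)] in the Loewner order and can only decrease when
   [sigma(t)] switches from 0 to 1; a backward induction from [Qf] concludes. *)

Section QuadraticForms.
Variable R : realFieldType.

Lemma addmxE k l (X Y : 'M[R]_(k, l)) i j : (X + Y) i j = X i j + Y i j.
Proof. by rewrite mxE. Qed.

Lemma oppmxE k l (X : 'M[R]_(k, l)) i j : (- X) i j = - X i j.
Proof. by rewrite mxE. Qed.

Lemma qformD k (M1 M2 : 'M[R]_k) x : qform (M1 + M2) x = qform M1 x + qform M2 x.
Proof. by rewrite /qform mulmxDr mulmxDl addmxE. Qed.

Lemma qformB k (M1 M2 : 'M[R]_k) x : qform (M1 - M2) x = qform M1 x - qform M2 x.
Proof. by rewrite /qform mulmxBr mulmxBl addmxE oppmxE. Qed.

Lemma qform_zero_mx k (x : 'cV[R]_k) : qform 0 x = 0.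
Proof. by rewrite /qform mulmx0 mul0mx mxE. Qed.

Lemma qform_zero_vec k (M : 'M[R]_k) : qform M 0 = 0.
Proof. by rewrite /qform mulmx0 mxE. Qed.

Lemma qform_mulmx k l (M : 'M[R]_l) (C : 'M[R]_(l, k)) x :
  qform M (C *m x) = qform (C^T *m M *m C) x.
Proof. by rewrite /qform trmx_mul !mulmxA. Qed.

Lemma qformDv k (M : 'M[R]_k) (u v : 'cV[R]_k) : M^T = M ->
  qform M (u + v) = qform M u + qform M v + (u^T *m M *m v) 0 0 *+ 2.
Proof.
move=> MT; have vMu : (v^T *m M *m u) 0 0 = (u^T *m M *m v) 0 0.
  by rewrite -{2}MT -{2}(trmxK v) -!trmx_mul [RHS]mxE mulmxA.
rewrite /qform mulmxDr [(u + v)^T]linearD /= !mulmxDl !addmxE vMu.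
by rewrite mulr2n [_ + (v^T *m M *m v) 0 0]addrC addrACA.
Qed.

Lemma psd0 k : psd (0 : 'M[R]_k).
Proof. by split=> [|x]; rewrite ?linear0 ?qform_zero_mx. Qed.

Lemma psdD k (M1 M2 : 'M[R]_k) : psd M1 -> psd M2 -> psd (M1 + M2).
Proof.
move=> [M1T M1q] [M2T M2q]; split=> [|x]; first by rewrite linearD /= M1T M2T.
by rewrite qformD addr_ge0.
Qed.

Lemma psd_conj k l (M : 'M[R]_l) (C : 'M[R]_(l, k)) : psd M -> psd (C^T *m M *m C).
Proof.
move=> [MT Mq]; split=> [|x]; last by rewrite -qform_mulmx.
by rewrite !trmx_mul trmxK MT mulmxA.
Qed.

Lemma pd_psd k (M : 'M[R]_k) : pd M -> psd M.
Proof.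
move=> [MT Mq]; split=> // x; have [->|x0] := eqVneq x 0.
  by rewrite qform_zero_vec.
exact/ltW/Mq.
Qed.

Lemma pdD_psd k (M1 M2 : 'M[R]_k) : pd M1 -> psd M2 -> pd (M1 + M2).
Proof.
move=> [M1T M1q] [M2T M2q]; split=> [|x x0]; first by rewrite linearD /= M1T M2T.
by rewrite qformD ltr_wpDr ?M1q.
Qed.

Lemma pd_unitmx k (M : 'M[R]_k) : pd M -> M \in unitmx.
Proof.
move=> [_ Mq]; rewrite unitmxE unitfE; apply/negP => /det0P [v v0 vM].
have vT0 : v^T != 0 by rewrite -(inj_eq trmx_inj) trmxK linear0.
by have := Mq _ vT0; rewrite /qform trmxK vM mul0mx mxE ltxx.
Qed.

Lemma loewner_ge_refl k (M : 'M[R]_k) : loewner_ge M M.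
Proof. by rewrite /loewner_ge subrr; apply: psd0. Qed.

Lemma loewner_ge_trans k (M1 M2 M3 : 'M[R]_k) :
  loewner_ge M1 M2 -> loewner_ge M2 M3 -> loewner_ge M1 M3.
Proof. by move=> M12 M23; rewrite /loewner_ge -(subrKA M2); apply: psdD. Qed.

Lemma loewner_ge_qform k (M1 M2 : 'M[R]_k) : M1^T = M1 -> M2^T = M2 ->
  (forall x, qform M2 x <= qform M1 x) -> loewner_ge M1 M2.
Proof.
move=> M1T M2T M12; split=> [|x]; first by rewrite linearB /= M1T M2T.
by rewrite qformB subr_ge0.
Qed.

End QuadraticForms.

Section Riccati.
Variables (R : realFieldType) (n m : nat).
Variables (A : 'M[R]_n) (B : 'M[R]_(n, m)) (Q : 'M[R]_n) (Rw : 'M[R]_m).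

Definition lqr_cost (P : 'M[R]_n) (x : 'cV[R]_n) (u : 'cV[R]_m) : R :=
  qform Q x + qform Rw u + qform P (A *m x + B *m u).

Definition riccati_gain (P : 'M[R]_n) : 'M[R]_(m, n) :=
  invmx (Rw + B^T *m P *m B) *m B^T *m P *m A.

Lemma lqr_cost_square P x u : P^T = P -> Rw^T = Rw ->
  Rw + B^T *m P *m B \in unitmx ->
  lqr_cost P x u = qform (riccati_step A B Q Rw true P) x
                   + qform (Rw + B^T *m P *m B) (u + riccati_gain P *m x).
Proof.
move=> PT RwT; rewrite /lqr_cost /riccati_step /riccati_gain scale1r.
set M := Rw + B^T *m P *m B => Munit.
have MT : M^T = M by rewrite linearD /= !trmx_mul trmxK PT RwT mulmxA.
have MiT : (invmx M)^T = invmx M by rewrite trmx_inv MT.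
have gainT : (invmx M *m B^T *m P *m A)^T = A^T *m P *m B *m invmx M.
  by rewrite !trmx_mul trmxK PT MiT !mulmxA.
have cross : (u^T *m M *m (invmx M *m B^T *m P *m A *m x)) 0 0
             = ((B *m u)^T *m P *m (A *m x)) 0 0.
  by rewrite trmx_mul !mulmxA mulmxK.
have gain_quad : (invmx M *m B^T *m P *m A)^T *m M *m (invmx M *m B^T *m P *m A)
                 = A^T *m P *m B *m invmx M *m B^T *m P *m A.
  by rewrite gainT !mulmxA mulmxKV.
rewrite [A *m x + _]addrC !qformDv // !qform_mulmx gain_quad cross qformB !qformD.
ring.
Qed.

Hypotheses (Qpsd : psd Q) (Rwpd : pd Rw).

Lemma lqr_cost_ge0 P x u : psd P -> 0 <= lqr_cost P x u.
Proof.
move=> [_ Pq]; have [[_ Qq] [_ Rwq]] := (Qpsd, pd_psd Rwpd).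
by rewrite /lqr_cost !addr_ge0.
Qed.

Lemma lqr_cost_mono P P' x u : loewner_ge P P' -> lqr_cost P' x u <= lqr_cost P x u.
Proof. by move=> [_ PP']; rewrite /lqr_cost lerD2l -subr_ge0 -qformB. Qed.

Lemma riccati_step_false P x :
  qform (riccati_step A B Q Rw false P) x = lqr_cost P x 0.
Proof.
rewrite /riccati_step /lqr_cost scale0r subr0 qform_zero_vec mulmx0 !addr0.
by rewrite qformD qform_mulmx.
Qed.

Lemma riccati_weight_pd P : psd P -> pd (Rw + B^T *m P *m B).
Proof. by move=> Ppsd; apply: pdD_psd => //; apply: psd_conj. Qed.

Lemma riccati_step_true P x : psd P ->
  qform (riccati_step A B Q Rw true P) x = lqr_cost P x (- (riccati_gain P *m x)).
Proof.
move=> Ppsd; have Munit := pd_unitmx (riccati_weight_pd Ppsd).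
by rewrite (lqr_cost_square _ _ Ppsd.1 Rwpd.1 Munit) addNr qform_zero_vec addr0.
Qed.

Lemma riccati_step_true_le P x u : psd P ->
  qform (riccati_step A B Q Rw true P) x <= lqr_cost P x u.
Proof.
move=> Ppsd; have Munit := pd_unitmx (riccati_weight_pd Ppsd).
rewrite (lqr_cost_square _ _ Ppsd.1 Rwpd.1 Munit) lerDl.
exact: (pd_psd (riccati_weight_pd Ppsd)).2.
Qed.

Lemma riccati_step_sym s P : P^T = P ->
  (riccati_step A B Q Rw s P)^T = riccati_step A B Q Rw s P.
Proof.
move=> PT; rewrite /riccati_step !linearD !linearN !linearZ /= !trmx_mul !trmxK.
by rewrite trmx_inv linearD /= !trmx_mul trmxK PT Qpsd.1 Rwpd.1 !mulmxA.
Qed.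

Lemma riccati_step_psd s P : psd P -> psd (riccati_step A B Q Rw s P).
Proof.
move=> Ppsd; split=> [|x]; first exact: riccati_step_sym Ppsd.1.
by case: s; rewrite ?riccati_step_true ?riccati_step_false ?lqr_cost_ge0.
Qed.

Lemma riccati_step_mono s P P' : psd P' -> loewner_ge P P' ->
  loewner_ge (riccati_step A B Q Rw s P) (riccati_step A B Q Rw s P').
Proof.
move=> P'psd PP'; have Ppsd : psd P by rewrite -(subrK P' P); apply: psdD.
apply: loewner_ge_qform => [||x]; rewrite ?riccati_step_sym ?Ppsd.1 ?P'psd.1 //.
case: s; last by rewrite !riccati_step_false lqr_cost_mono.
(* the input that is optimal for [P] is admissible for [P'] *)
rewrite [X in _ <= X]riccati_step_true //.
exact: le_trans (riccati_step_true_le _ _ P'psd) (lqr_cost_mono _ _ PP').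
Qed.

Lemma riccati_step_signal (s1 s2 : bool) P : psd P -> (s1 -> s2) ->
  loewner_ge (riccati_step A B Q Rw s1 P) (riccati_step A B Q Rw s2 P).
Proof.
move=> Ppsd; case: s1; first by move=> /(_ isT) ->; apply: loewner_ge_refl.
case: s2 => _; last exact: loewner_ge_refl.
apply: loewner_ge_qform => [||x]; rewrite ?riccati_step_sym ?Ppsd.1 //.
by rewrite riccati_step_false riccati_step_true_le.
Qed.

Lemma riccati_from_psd sigma k t P : psd P -> psd (riccati_from A B Q Rw sigma k t P).
Proof. by move=> Ppsd; elim: k t => [|k IHk] t //=; apply: riccati_step_psd. Qed.

Lemma riccati_from_signal sigma1 sigma2 k t P : psd P -> signal_le sigma1 sigma2 ->
  loewner_ge (riccati_from A B Q Rw sigma1 k t P) (riccati_from A B Q Rw sigma2 k t P).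
Proof.
move=> Ppsd le12; elim: k t => [|k IHk] t /=; first exact: loewner_ge_refl.
have P2psd := riccati_from_psd sigma2 k t.+1 Ppsd.
apply: (loewner_ge_trans _ (riccati_step_signal P2psd (le12 t))).
exact: riccati_step_mono P2psd (IHk t.+1).
Qed.

End Riccati.

Theorem mainTheorem4 (R : realFieldType) (n m : nat)
    (A : 'M[R]_n) (B : 'M[R]_(n, m)) (Q : 'M[R]_n) (Rw : 'M[R]_m) (Qf : 'M[R]_n)
    (tf : nat) (sigma1 sigma2 : nat -> bool) :
  psd Q -> pd Rw -> pd Qf ->
  signal_le sigma1 sigma2 ->
  loewner_ge (P_sigma A B Q Rw Qf tf sigma1 0) (P_sigma A B Q Rw Qf tf sigma2 0).
Proof.
move=> Qpsd Rwpd Qfpd le12.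
by apply: riccati_from_signal => //; apply: pd_psd.
Qed.
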